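(* Let $(S(t),E(t),I(t),R(t))$ be a solution of the SEIR initial value problem described in the context such that $S(t)>0$, $E(t)>0$ and $I(t)>0$ for $t>0$. Then the limit $R(\infty)=\lim_{t\to\infty}R(t)$ exists, and, writing $a:=e^{-(\beta/\gamma)R(\infty)}$ and $u_0:=e^{-(\beta/\gamma)\tilde R}$, there is a function $\psi$, continuous and positive on $(a,u_0]$ and $C^1$ on $(a,u_0)$, satisfying the Abel differential equation of the second kind \[ \psi'\psi-\frac{\gamma+\delta}{u}\psi=-\delta\,\frac{\beta N-\beta\tilde S e^{(\beta/\gamma)\tilde R}u+\gamma\log u}{u},\qquad u\in(a,u_0), \] together with $\psi(u_0)=\beta\tilde I$ and $\lim_{u\to a+0}\psi(u)=0$, such that, with \[ t=\varphi(u)=\int_u^{u_0}\frac{d\xi}{\xi\psi(\xi)}, \] the solution has the parametric representation, for $a<u\le u_0$, \[ S(\varphi(u))=\tilde S e^{(\beta/\gamma)\tilde R}u,\qquad E(\varphi(u))=\tilde E e^{-\delta\varphi(u)}+\tilde S e^{(\beta/\gamma)\tilde R}e^{-\delta\varphi(u)}\int_u^{u_0}e^{\delta\varphi(v)}dv, \] \[ I(\varphi(u))=N-\tilde S e^{(\beta/\gamma)\tilde R}u+\frac{\gamma}{\beta}\log u-\tilde E e^{-\delta\varphi(u)}-\tilde S e^{(\beta/\gamma)\tilde R}e^{-\delta\varphi(u)}\int_u^{u_0}e^{\delta\varphi(v)}dv,\qquad R(\varphi(u))=-\frac{\gamma}{\beta}\log u . \]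
   Context: Let $\beta,\gamma,\delta>0$ be constants and $\tilde S,\tilde E,\tilde I,\tilde R$ real numbers with $N:=\tilde S+\tilde E+\tilde I+\tilde R>0$. The SEIR initial value problem is $S'(t)=-\beta S(t)I(t)$, $E'(t)=\beta S(t)I(t)-\delta E(t)$, $I'(t)=\delta E(t)-\gamma I(t)$, $R'(t)=\gamma I(t)$ for $t>0$, with $S(0)=\tilde S$, $E(0)=\tilde E$, $I(0)=\tilde I$, $R(0)=\tilde R$; a solution is a vector function $(S,E,I,R)$ of class $C^1(0,\infty)\cap C[0,\infty)$ satisfying these. Standing assumptions: (A1) $\tilde I>0$; (A2) $\tilde E>(\gamma/\delta)\tilde I$; (A3) $\tilde S>\delta\tilde E/(\beta\tilde I)$; (A4) $\tilde R\ge 0$ and $N>\tilde S e^{(\beta/\gamma)\tilde R}+\tilde R$. *)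

From Stdlib Require Import Reals.
From Coquelicot Require Import Coquelicot.
Open Scope R_scope.

(* A solution of the SEIR initial value problem: class C^1(0,oo) /\ C[0,oo),
   satisfying the ODEs for t > 0 and the initial conditions at t = 0.
   Functions are defined on all of R; only their values on [0,oo) matter.
   Continuity on [0,oo) at the endpoint 0 is right-continuity. *)
Definition SEIR_solution (beta gamma delta S0 E0 I0 R0 : R)
  (S E I Rc : R -> R) : Prop :=
  S 0 = S0 /\ E 0 = E0 /\ I 0 = I0 /\ Rc 0 = R0 /\
  filterlim S (at_right 0) (locally (S 0)) /\
  filterlim E (at_right 0) (locally (E 0)) /\
  filterlim I (at_right 0) (locally (I 0)) /\
  filterlim Rc (at_right 0) (locally (Rc 0)) /\
  (forall t, 0 < t -> is_derive S t (- beta * S t * I t)) /\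
  (forall t, 0 < t -> is_derive E t (beta * S t * I t - delta * E t)) /\
  (forall t, 0 < t -> is_derive I t (delta * E t - gamma * I t)) /\
  (forall t, 0 < t -> is_derive Rc t (gamma * I t)) /\
  (forall t, 0 < t ->
     continuous (Derive S) t /\ continuous (Derive E) t /\
     continuous (Derive I) t /\ continuous (Derive Rc) t).

Definition seir_phi (psi : R -> R) (u0 u : R) : R :=
  RInt (fun xi => / (xi * psi xi)) u u0.

(* Summing the equations shows that S + E + I + R = N is conserved, and
   S e^{(beta/gamma) R} is constant, so S = K u along the solution, where
   u = U(t) := e^{-(beta/gamma) R(t)}.  As R' = gamma I > 0, R increases to a
   finite limit R(oo) and U decreases from u0 towards a; the paper's time
   change t = phi(u) is the inverse tau of U.  Indeed, with
   psi(u) := beta I(tau u), the relation U' = - beta I U gives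
   tau' = -1/(u psi(u)), and tau(u0) = 0.  Differentiating psi and eliminating E
   through the conservation law gives the Abel equation, and
   E e^{delta t} - K int_{U t}^{u0} e^{delta tau} is constant, which is the
   formula for E.  Finally I -> 0 (Barbalat: R converges and I' is bounded),
   so psi -> 0 as u -> a. *)

From Stdlib Require Import Reals Lra ClassicalEpsilon.
From Coquelicot Require Import Coquelicot.
Open Scope R_scope.

(* [auto_derive], with the derivatives of the unknown functions taken from the
   [is_derive] hypotheses; leaves the equation between derivative values. *)
Ltac auto_derive_from_context :=
  auto_derive;
  [ repeat split; eexists; eassumption
  | repeat match goal with
           | H : is_derive ?f ?x ?l |- _ =>
               rewrite (is_derive_unique (fun y : R => f y) x l H); clear H
           end ].

(* [f] on [0, +oo), continued to the left by the constant [f 0]: continuity of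
   [extend0 f] at [0] is right continuity of [f] at [0], and Stdlib's
   [continuity_pt] calculus applies to it. *)
Definition extend0 (f : R -> R) (t : R) : R := f (Rmax 0 t).

Lemma extend0_nonneg (f : R -> R) (t : R) : 0 <= t -> extend0 f t = f t.
Proof. intros Ht. unfold extend0. now rewrite Rmax_right. Qed.

Lemma continuity_pt_extend0_0 (f : R -> R) :
  filterlim f (at_right 0) (locally (f 0)) -> continuity_pt (extend0 f) 0.
Proof.
  intros Hf. apply continuity_pt_filterlim.
  rewrite (extend0_nonneg f 0 (Rle_refl 0)).
  intros P HP. destruct (Hf P HP) as [d Hd]. exists d. intros x Hx.
  unfold extend0. destruct (Rle_lt_dec x 0) as [Hx0|Hx0].
  - rewrite Rmax_left by lra. now apply locally_singleton.
  - rewrite Rmax_right by lra. now apply Hd.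
Qed.

Lemma continuity_pt_extend0_of_continuity (f : R -> R) :
  continuity_pt f 0 -> continuity_pt (extend0 f) 0.
Proof.
  intros Hf. apply continuity_pt_extend0_0.
  apply (filterlim_filter_le_1 (F := locally 0)); [apply filter_le_within|].
  now apply continuity_pt_filterlim.
Qed.

Lemma is_derive_extend0 (f : R -> R) (t l : R) :
  0 < t -> is_derive f t l -> is_derive (extend0 f) t l.
Proof.
  intros Ht. apply is_derive_ext_loc.
  apply (filter_imp (fun y => 0 < y)); [|exact (open_gt 0 t Ht)].
  intros y Hy. symmetry. apply extend0_nonneg. lra.
Qed.

Lemma continuity_pt_extend0 (f : R -> R) :
  continuity_pt (extend0 f) 0 -> (forall t, 0 < t -> ex_derive f t) ->
  forall t, 0 <= t -> continuity_pt (extend0 f) t.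
Proof.
  intros H0 Hf t Ht. destruct (Req_dec t 0) as [->|Ht0]; [exact H0|].
  destruct (Hf t ltac:(lra)) as [l Hl].
  apply continuity_pt_filterlim, (ex_derive_continuous (V := R_NormedModule)).
  exists l. apply is_derive_extend0; [lra|exact Hl].
Qed.

Lemma MVT_extend0 (f f' : R -> R) (s t : R) :
  0 <= s < t -> continuity_pt (extend0 f) 0 ->
  (forall x, 0 < x -> is_derive f x (f' x)) ->
  exists x, s <= x <= t /\ f t - f s = f' x * (t - s).
Proof.
  intros Hst H0 Hf.
  destruct (MVT_gen (extend0 f) s t f') as (x & Hx & Heq);
    rewrite ?Rmin_left, ?Rmax_right in * by lra.
  - intros x Hx. apply is_derive_extend0, Hf; lra.
  - intros x Hx. apply (continuity_pt_extend0 f H0); [|lra].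
    intros y Hy. exists (f' y). now apply Hf.
  - rewrite !extend0_nonneg in Heq by lra. now exists x.
Qed.

Lemma is_derive_0_const (f : R -> R) :
  continuity_pt (extend0 f) 0 -> (forall x, 0 < x -> is_derive f x 0) ->
  forall t, 0 <= t -> f t = f 0.
Proof.
  intros H0 Hf t Ht. destruct (Req_dec t 0) as [->|Ht0]; [reflexivity|].
  destruct (MVT_extend0 f (fun _ => 0) 0 t) as (x & _ & Heq); trivial; lra.
Qed.

Lemma is_derive_pos_incr (f f' : R -> R) :
  continuity_pt (extend0 f) 0 -> (forall x, 0 < x -> is_derive f x (f' x)) ->
  (forall x, 0 <= x -> 0 < f' x) -> forall s t, 0 <= s < t -> f s < f t.
Proof.
  intros H0 Hf Hpos s t Hst.
  destruct (MVT_extend0 f f' s t Hst H0 Hf) as (x & Hx & Heq).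
  assert (0 < f' x * (t - s)) by (apply Rmult_lt_0_compat; [apply Hpos|]; lra).
  lra.
Qed.

Lemma incr_bounded_ex_lim (f : R -> R) (M : R) :
  (forall s t, 0 <= s <= t -> f s <= f t) -> (forall t, 0 <= t -> f t <= M) ->
  exists l : R, is_lim f p_infty l.
Proof.
  intros Hincr Hbnd.
  destruct (completeness (fun y => exists t, 0 <= t /\ y = f t)) as [l [Hub Hlub]].
  - exists M. intros y (t & Ht & ->). auto.
  - exists (f 0), 0. split; [lra|reflexivity].
  - exists l. apply is_lim_spec. intros eps.
    destruct (classic (exists t, 0 <= t /\ l - pos eps < f t)) as [(t0 & Ht0 & Hlt)|Hnone].
    + exists t0. intros x Hx.
      assert (f t0 <= f x) by (apply Hincr; lra).
      assert (f x <= l) by (apply Hub; exists x; split; [lra|reflexivity]).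
      rewrite Rabs_left1; lra.
    + assert (l <= l - eps); [|pose proof (cond_pos eps); lra].
      apply Hlub. intros y (t & Ht & ->). apply Rnot_lt_le. intros Hlt.
      apply Hnone. now exists t.
Qed.

Lemma Barbalat (F f f' : R -> R) (l M : R) :
  (forall t, 0 < t -> is_derive F t (f t)) ->
  (forall t, 0 < t -> is_derive f t (f' t)) ->
  (forall t, 0 < t -> Rabs (f' t) <= M) ->
  is_lim F p_infty l -> is_lim f p_infty 0.
Proof.
  intros HF Hf Hf' HFl. apply is_lim_spec. intros eps.
  pose proof (cond_pos eps) as Heps.
  assert (HM : 0 <= M) by (apply Rle_trans with (2 := Hf' 1 Rlt_0_1), Rabs_pos).
  set (h := eps / (2 * (M + 1))).
  assert (Hh : 0 < h) by (unfold h; apply Rdiv_lt_0_compat; lra).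
  assert (HMh : M * h <= eps / 2).
  { replace (eps / 2) with ((M + 1) * h) by (unfold h; field; lra). nra. }
  assert (Hd : 0 < eps * h / 4) by (apply Rdiv_lt_0_compat; [apply Rmult_lt_0_compat|]; lra).
  apply is_lim_spec in HFl. destruct (HFl (mkposreal _ Hd)) as [T HT]. simpl in HT.
  exists (Rmax T 0 + h). intros t Ht.
  pose proof (Rmax_l T 0). pose proof (Rmax_r T 0).
  destruct (MVT_abs F f (t - h) t) as (x & HFx & Hx);
    rewrite ?Rmin_left, ?Rmax_right in * by lra.
  { intros x Hx. apply is_derive_Reals, HF. lra. }
  destruct (MVT_abs f f' x t) as (y & Hfy & Hy);
    rewrite ?Rmin_left, ?Rmax_right in * by lra.
  { intros y Hy. apply is_derive_Reals, Hf. lra. }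
  replace (t - (t - h)) with h in HFx by ring.
  rewrite (Rabs_pos_eq h), (Rabs_pos_eq (t - x)) in * by lra.
  assert (Hfx : Rabs (f x) * h < eps * h / 2).
  { rewrite <- HFx.
    pose proof (HT t ltac:(lra)) as HTt. pose proof (HT (t - h) ltac:(lra)) as HTh.
    apply Rabs_def2 in HTt. apply Rabs_def2 in HTh. apply Rabs_def1; lra. }
  assert (Hft : Rabs (f t - f x) <= eps / 2).
  { rewrite Hfy. apply Rle_trans with (M * h); [|exact HMh].
    apply Rmult_le_compat; [apply Rabs_pos|lra|apply Hf'; lra|lra]. }
  pose proof (Rabs_triang_inv (f t) (f x)).
  rewrite Rminus_0_r. nra.
Qed.

Section DecreasingInverse.

Variables (U : R -> R) (a : R).
Hypothesis U_cont : forall t, 0 <= t -> continuity_pt (extend0 U) t.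
Hypothesis U_decr : forall s t, 0 <= s < t -> U t < U s.
Hypothesis U_lim : is_lim U p_infty a.

Lemma decr_gt_lim t : 0 <= t -> a < U t.
Proof.
  intros Ht.
  assert (Hle : Rbar_le a (U (t + 1))).
  { apply (is_lim_le_loc U (fun _ => U (t + 1)) p_infty); [|exact U_lim|apply is_lim_const].
    exists (t + 1). intros y Hy. apply Rlt_le, U_decr. lra. }
  assert (U (t + 1) < U t) by (apply U_decr; lra).
  simpl in Hle. lra.
Qed.

Lemma decr_onto v : a < v <= U 0 -> exists t, 0 <= t /\ U t = v.
Proof.
  intros [Hav HvU]. destruct (Req_dec v (U 0)) as [->|Hne].
  { exists 0. split; [lra|reflexivity]. }
  destruct (proj2 (is_lim_spec _ _ _) U_lim (mkposreal (v - a) ltac:(lra))) as [M HM].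
  set (T := Rmax M 0 + 1).
  assert (HT : M < T /\ 0 < T) by (unfold T; generalize (Rmax_l M 0) (Rmax_r M 0); lra).
  assert (HUT : U T < v) by (specialize (HM T (proj1 HT)); apply Rabs_def2 in HM; simpl in HM; lra).
  destruct (Ranalysis5.IVT_interv (fun x => v - extend0 U x) 0 T) as [z [Hz Hfz]];
    rewrite ?(extend0_nonneg U 0), ?(extend0_nonneg U T) by lra; [|lra ..|].
  - intros x Hx. apply continuity_pt_minus.
    + apply continuity_pt_const. intros ? ?. reflexivity.
    + apply U_cont. lra.
  - exists z. split; [lra|]. rewrite extend0_nonneg in Hfz by lra. lra.
Qed.

(* The inverse of [U] on [(a, U 0]], continued by [0] on [[U 0, +oo)]. *)
Definition dec_inverse (v : R) : R :=
  epsilon (inhabits 0) (fun t => 0 <= t /\ U t = Rmin v (U 0)).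

Lemma dec_inverse_spec v :
  a < v -> 0 <= dec_inverse v /\ U (dec_inverse v) = Rmin v (U 0).
Proof.
  intros Hv. apply (epsilon_spec (inhabits 0) (fun t => 0 <= t /\ U t = Rmin v (U 0))).
  apply decr_onto. split; [|apply Rmin_r].
  apply Rmin_glb_lt; [lra|apply decr_gt_lim, Rle_refl].
Qed.

Lemma lt_dec_inverse t v :
  0 <= t -> a < v -> (t < dec_inverse v <-> Rmin v (U 0) < U t).
Proof.
  intros Ht Hv. destruct (dec_inverse_spec v Hv) as [Hs HUs]. rewrite <- HUs.
  split; intros H.
  - apply U_decr. lra.
  - destruct (Rtotal_order t (dec_inverse v)) as [Hlt|[Heq|Hgt]]; [exact Hlt| |].
    + rewrite <- Heq in H. lra.
    + pose proof (U_decr _ _ (conj Hs Hgt)). lra.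
Qed.

Lemma dec_inverse_U t : 0 <= t -> dec_inverse (U t) = t.
Proof.
  intros Ht. assert (Hat : a < U t) by now apply decr_gt_lim.
  assert (HUt : Rmin (U t) (U 0) = U t).
  { apply Rmin_left. destruct (Req_dec t 0) as [->|Ht0]; [lra|].
    apply Rlt_le, U_decr. lra. }
  destruct (dec_inverse_spec _ Hat) as [Hs HUs]. rewrite HUt in HUs.
  destruct (Rtotal_order (dec_inverse (U t)) t) as [Hlt|[Heq|Hgt]]; [|exact Heq|].
  - pose proof (U_decr _ _ (conj Hs Hlt)). lra.
  - pose proof (U_decr _ _ (conj Ht Hgt)). lra.
Qed.

Lemma dec_inverse_upper v eps :
  a < v -> 0 < eps -> locally v (fun w => dec_inverse w < dec_inverse v + eps).
Proof.
  intros Hv Heps. destruct (dec_inverse_spec v Hv) as [Hs HUs].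
  set (t := dec_inverse v + eps / 2).
  assert (HUt : U t < Rmin v (U 0)) by (rewrite <- HUs; apply U_decr; unfold t; lra).
  pose proof (Rmin_l v (U 0)). pose proof (Rmin_r v (U 0)).
  apply (filter_imp (fun w => a < w /\ U t < w)).
  - intros w [Hw HUw].
    assert (~ t < dec_inverse w).
    { rewrite (lt_dec_inverse t w) by (unfold t; lra).
      apply Rle_not_lt, Rmin_glb; lra. }
    unfold t in *. lra.
  - apply filter_and; apply open_gt; lra.
Qed.

Lemma dec_inverse_lower v eps :
  a < v -> 0 < eps -> locally v (fun w => dec_inverse v - eps < dec_inverse w).
Proof.
  intros Hv Heps. destruct (dec_inverse_spec v Hv) as [Hs HUs].
  destruct (Rlt_or_le (dec_inverse v) eps) as [Hsmall|Hlarge].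
  { apply (filter_imp (fun w => a < w)); [|now apply open_gt].
    intros w Hw. destruct (dec_inverse_spec w Hw). lra. }
  set (t := dec_inverse v - eps / 2).
  assert (HUt : Rmin v (U 0) < U t) by (rewrite <- HUs; apply U_decr; unfold t; lra).
  assert (Hmin : locally v (fun w => Rmin w (U 0) < U t)).
  { destruct (Rle_or_lt v (U 0)) as [HvU|HvU].
    - rewrite Rmin_left in HUt by lra.
      apply (filter_imp (fun w => w < U t)); [|now apply open_lt].
      intros w Hw. pose proof (Rmin_l w (U 0)). lra.
    - rewrite Rmin_right in HUt by lra.
      apply filter_forall. intros w. pose proof (Rmin_r w (U 0)). lra. }
  apply (filter_imp (fun w => a < w /\ Rmin w (U 0) < U t)).
  - intros w [Hw Hmw]. apply (lt_dec_inverse t w) in Hmw; unfold t in *; lra.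
  - apply filter_and; [now apply open_gt|exact Hmin].
Qed.

Lemma continuity_pt_dec_inverse v : a < v -> continuity_pt dec_inverse v.
Proof.
  intros Hv. apply continuity_pt_filterlim, filterlim_locally. intros eps.
  pose proof (cond_pos eps).
  apply (filter_imp (fun w => dec_inverse v - eps < dec_inverse w < dec_inverse v + eps)).
  - intros w Hw. change (Rabs (dec_inverse w - dec_inverse v) < eps).
    apply Rabs_def1; lra.
  - apply filter_and; [apply dec_inverse_lower|apply dec_inverse_upper]; assumption.
Qed.

End DecreasingInverse.

Lemma is_derive_RInt_lower (h : R -> R) (lo b x : R) :
  (forall z, lo < z -> continuity_pt h z) -> lo < x -> lo < b ->
  is_derive (fun y => RInt h y b) x (- h x).
Proof.
  intros Hh Hx Hb.
  apply (is_derive_RInt' (V := R_NormedModule) h (fun y => RInt h y b) x b).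
  - apply (filter_imp (fun y => lo < y)); [|now apply open_gt].
    intros y Hy. apply (RInt_correct (V := R_CompleteNormedModule)).
    apply (ex_RInt_continuous (V := R_CompleteNormedModule)).
    intros z Hz. apply continuity_pt_filterlim, Hh.
    pose proof (Rmin_glb_lt y b lo Hy Hb). lra.
  - apply continuity_pt_filterlim, Hh, Hx.
Qed.

Section SEIR.

Variables beta gamma delta S0 E0 I0 R0 : R.
Variables S E I Rc : R -> R.
Hypotheses (Hbeta : 0 < beta) (Hgamma : 0 < gamma) (Hdelta : 0 < delta).
Hypothesis I0_pos : 0 < I0.
Hypotheses (S_0 : S 0 = S0) (E_0 : E 0 = E0) (I_0 : I 0 = I0) (Rc_0 : Rc 0 = R0).
Hypotheses (S_right : filterlim S (at_right 0) (locally (S 0)))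
  (E_right : filterlim E (at_right 0) (locally (E 0)))
  (I_right : filterlim I (at_right 0) (locally (I 0)))
  (Rc_right : filterlim Rc (at_right 0) (locally (Rc 0))).
Hypotheses (dS : forall t, 0 < t -> is_derive S t (- beta * S t * I t))
  (dE : forall t, 0 < t -> is_derive E t (beta * S t * I t - delta * E t))
  (dI : forall t, 0 < t -> is_derive I t (delta * E t - gamma * I t))
  (dRc : forall t, 0 < t -> is_derive Rc t (gamma * I t)).
Hypothesis SEI_pos : forall t, 0 < t -> 0 < S t /\ 0 < E t /\ 0 < I t.

Let N := S0 + E0 + I0 + R0.
Let c := beta / gamma.
Let K := S0 * exp (c * R0).
Let U (t : R) : R := exp (- c * Rc t).

Lemma c_pos : 0 < c.
Proof. unfold c. now apply Rdiv_lt_0_compat. Qed.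

Lemma I_pos t : 0 <= t -> 0 < I t.
Proof.
  intros Ht. destruct (Req_dec t 0) as [->|Ht0]; [now rewrite I_0|].
  apply SEI_pos. lra.
Qed.

Lemma SEIR_conservation t : 0 <= t -> S t + E t + I t + Rc t = N.
Proof.
  intros Ht.
  rewrite (is_derive_0_const (fun t => S t + E t + I t + Rc t)); trivial.
  - unfold N. now rewrite S_0, E_0, I_0, Rc_0.
  - unfold extend0. repeat apply continuity_pt_plus; now apply continuity_pt_extend0_0.
  - intros s Hs.
    pose proof (dS s Hs). pose proof (dE s Hs). pose proof (dI s Hs). pose proof (dRc s Hs).
    auto_derive_from_context. ring.
Qed.

Lemma S_eq_K_U t : 0 <= t -> S t = K * U t.
Proof.
  intros Ht.
  assert (Hinv : S t * exp (c * Rc t) = K).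
  { rewrite (is_derive_0_const (fun t => S t * exp (c * Rc t))); trivial.
    - unfold K. now rewrite S_0, Rc_0.
    - unfold extend0. apply continuity_pt_mult; [now apply continuity_pt_extend0_0|].
      apply (continuity_pt_comp (fun x => c * Rc (Rmax 0 x)) exp).
      + apply continuity_pt_scal. now apply continuity_pt_extend0_0.
      + apply derivable_continuous_pt, derivable_pt_exp.
    - intros s Hs. pose proof (dS s Hs). pose proof (dRc s Hs).
      auto_derive_from_context. unfold c. field. lra. }
  unfold U. rewrite <- Hinv, Rmult_assoc, <- exp_plus.
  replace (c * Rc t + - c * Rc t) with 0 by ring. rewrite exp_0. ring.
Qed.

Lemma Rc_incr s t : 0 <= s < t -> Rc s < Rc t.
Proof.
  apply (is_derive_pos_incr Rc (fun x => gamma * I x)).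
  - now apply continuity_pt_extend0_0.
  - exact dRc.
  - intros x Hx. apply Rmult_lt_0_compat; [lra|now apply I_pos].
Qed.

Lemma R0_le_Rc t : 0 <= t -> R0 <= Rc t.
Proof.
  intros Ht. rewrite <- Rc_0. destruct (Req_dec t 0) as [->|Ht0]; [lra|].
  apply Rlt_le, Rc_incr. lra.
Qed.

Lemma Rc_lt_N t : 0 <= t -> Rc t < N.
Proof.
  assert (Hpos : forall s, 0 < s -> Rc s < N).
  { intros s Hs. rewrite <- (SEIR_conservation s) by lra.
    destruct (SEI_pos s Hs) as (? & ? & ?). lra. }
  intros Ht. destruct (Req_dec t 0) as [->|Ht0]; [|apply Hpos; lra].
  pose proof (Rc_incr 0 1 ltac:(lra)). pose proof (Hpos 1 Rlt_0_1). lra.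
Qed.

Lemma Rc_ex_lim : exists Rinf : R, is_lim Rc p_infty Rinf.
Proof.
  apply (incr_bounded_ex_lim Rc N).
  - intros s t Hst. destruct (Req_dec s t) as [->|Hne]; [lra|].
    apply Rlt_le, Rc_incr. lra.
  - intros t Ht. now apply Rlt_le, Rc_lt_N.
Qed.

Variable Rinf : R.
Hypothesis Rc_lim : is_lim Rc p_infty Rinf.

Let a := exp (- c * Rinf).
Let u0 := exp (- c * R0).

Lemma U_0 : U 0 = u0.
Proof. unfold U, u0. now rewrite Rc_0. Qed.

Lemma U_decr s t : 0 <= s < t -> U t < U s.
Proof.
  intros Hst. apply exp_increasing.
  pose proof (Rc_incr s t Hst). pose proof c_pos. nra.
Qed.

Lemma U_lim : is_lim U p_infty a.
Proof.
  apply (is_lim_comp_continuous Rc (fun r => exp (- c * r))); [exact Rc_lim|].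
  apply (ex_derive_continuous (V := R_NormedModule)). now auto_derive.
Qed.

Lemma is_derive_U t : 0 < t -> is_derive U t (- beta * I t * U t).
Proof.
  intros Ht. pose proof (dRc t Ht). unfold U.
  auto_derive_from_context. unfold c. field. lra.
Qed.

Lemma continuity_pt_extend0_U t : 0 <= t -> continuity_pt (extend0 U) t.
Proof.
  apply continuity_pt_extend0.
  - unfold extend0, U.
    apply (continuity_pt_comp (fun x => Rc (Rmax 0 x)) (fun r => exp (- c * r))).
    + now apply continuity_pt_extend0_0.
    + apply derivable_continuous_pt. reg.
  - intros s Hs. exists (- beta * I s * U s). now apply is_derive_U.
Qed.

Lemma continuity_pt_extend0_comp_U (g : R -> R) :
  ex_derive g u0 -> continuity_pt (extend0 (fun t => g (U t))) 0.
Proof.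
  intros [l Hg]. apply (continuity_pt_comp (extend0 U) g).
  - apply continuity_pt_extend0_U, Rle_refl.
  - rewrite extend0_nonneg, U_0 by lra.
    apply continuity_pt_filterlim, (ex_derive_continuous (V := R_NormedModule)).
    now exists l.
Qed.

Lemma Rc_eq_ln_U t : Rc t = - (gamma / beta) * ln (U t).
Proof. unfold U, c. rewrite ln_exp. field. lra. Qed.

Let tau := dec_inverse U.
Let psi (u : R) : R := beta * I (tau u).

Lemma tau_spec u : a < u -> 0 <= tau u /\ U (tau u) = Rmin u u0.
Proof.
  rewrite <- U_0.
  exact (dec_inverse_spec U a continuity_pt_extend0_U U_decr U_lim u).
Qed.

Lemma tau_U t : 0 <= t -> tau (U t) = t.
Proof. exact (dec_inverse_U U a continuity_pt_extend0_U U_decr U_lim t). Qed.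

Lemma lt_tau t u : 0 <= t -> a < u -> (t < tau u <-> Rmin u u0 < U t).
Proof.
  rewrite <- U_0.
  exact (lt_dec_inverse U a continuity_pt_extend0_U U_decr U_lim t u).
Qed.

Lemma continuity_pt_tau u : a < u -> continuity_pt tau u.
Proof. exact (continuity_pt_dec_inverse U a continuity_pt_extend0_U U_decr U_lim u). Qed.

Lemma a_pos : 0 < a.
Proof. apply exp_pos. Qed.

Lemma U_gt_a t : 0 <= t -> a < U t.
Proof. exact (decr_gt_lim U a U_decr U_lim t). Qed.

Lemma a_lt_u0 : a < u0.
Proof. rewrite <- U_0. exact (U_gt_a 0 (Rle_refl 0)). Qed.

Lemma tau_pos u : a < u < u0 -> 0 < tau u.
Proof.
  intros Hu. apply lt_tau; [lra|lra|]. rewrite U_0, Rmin_left; lra.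
Qed.

Lemma psi_pos u : a < u -> 0 < psi u.
Proof.
  intros Hu. apply Rmult_lt_0_compat; [lra|]. apply I_pos, tau_spec, Hu.
Qed.

Lemma psi_u0 : psi u0 = beta * I0.
Proof. unfold psi. rewrite <- U_0, tau_U, I_0 by lra. reflexivity. Qed.

Lemma continuity_pt_psi u : a < u -> continuity_pt psi u.
Proof.
  intros Hu. apply continuity_pt_filterlim.
  apply (continuous_ext_loc _ (fun v => beta * extend0 I (tau v))).
  - apply (filter_imp (fun v => a < v)); [|now apply open_gt].
    intros v Hv. unfold psi. rewrite extend0_nonneg; [reflexivity|apply tau_spec, Hv].
  - apply continuity_pt_filterlim, continuity_pt_scal.
    apply (continuity_pt_comp tau (extend0 I)); [now apply continuity_pt_tau|].
    apply continuity_pt_extend0; [now apply continuity_pt_extend0_0| |apply tau_spec, Hu].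
    intros s Hs. exists (delta * E s - gamma * I s). now apply dI.
Qed.

Lemma I_lim : is_lim (fun t => beta * I t) p_infty 0.
Proof.
  apply (is_lim_ext (fun t => c * (gamma * I t))); [intros t; unfold c; field; lra|].
  replace (Finite 0) with (Rbar_mult c 0) by (simpl; f_equal; ring).
  apply is_lim_scal_l.
  apply (Barbalat Rc (fun t => gamma * I t) (fun t => gamma * (delta * E t - gamma * I t))
           Rinf (gamma * ((delta + gamma) * (N - R0)))); [exact dRc| | |exact Rc_lim].
  - intros t Ht. apply is_derive_scal, dI, Ht.
  - intros t Ht. rewrite Rabs_mult, Rabs_pos_eq by lra.
    apply Rmult_le_compat_l; [lra|].
    destruct (SEI_pos t Ht) as (HS & HE & HI).
    pose proof (SEIR_conservation t ltac:(lra)). pose proof (R0_le_Rc t ltac:(lra)).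
    apply Rabs_le. nra.
Qed.

Lemma psi_lim_a : filterlim psi (at_right a) (locally 0).
Proof.
  apply (filterlim_comp _ _ _ tau (fun t => beta * I t) _ (Rbar_locally p_infty));
    [|exact I_lim].
  intros P [M HM]. set (T := Rmax 0 M).
  assert (HT : 0 <= T /\ M <= T) by (split; [apply Rmax_l|apply Rmax_r]).
  assert (HaT : a < U T) by exact (U_gt_a T (proj1 HT)).
  apply (filter_imp (F := locally a) (fun w => w < U T)); [|now apply open_lt].
  intros w HwT Haw. apply HM.
  assert (T < tau w) by (apply lt_tau; [lra|exact Haw|]; pose proof (Rmin_l w u0); lra).
  lra.
Qed.

Lemma continuity_pt_phi_integrand u : a < u -> continuity_pt (fun xi => / (xi * psi xi)) u.
Proof.
  intros Hu. pose proof (psi_pos u Hu). pose proof a_pos.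
  apply (continuity_pt_inv (fun xi => xi * psi xi)).
  - apply continuity_pt_mult; [apply continuity_pt_id|now apply continuity_pt_psi].
  - apply Rgt_not_eq, Rmult_lt_0_compat; lra.
Qed.

Lemma is_derive_seir_phi u : a < u -> is_derive (seir_phi psi u0) u (- / (u * psi u)).
Proof.
  intros Hu. apply (is_derive_RInt_lower (fun xi => / (xi * psi xi)) a).
  - exact continuity_pt_phi_integrand.
  - exact Hu.
  - exact a_lt_u0.
Qed.

Lemma seir_phi_u0 : seir_phi psi u0 u0 = 0.
Proof. exact (RInt_point (V := R_CompleteNormedModule) u0 _). Qed.

Lemma seir_phi_U t : 0 <= t -> seir_phi psi u0 (U t) = t.
Proof.
  intros Ht.
  enough (H : seir_phi psi u0 (U t) - t = seir_phi psi u0 (U 0) - 0)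
    by (rewrite U_0, seir_phi_u0 in H; lra).
  apply (is_derive_0_const (fun t => seir_phi psi u0 (U t) - t)); trivial.
  - unfold extend0. apply continuity_pt_minus.
    + apply (continuity_pt_extend0_comp_U (seir_phi psi u0)).
      eexists. exact (is_derive_seir_phi u0 a_lt_u0).
    + apply (continuity_pt_extend0_of_continuity (fun x => x)), continuity_pt_id.
  - intros s Hs.
    pose proof (is_derive_U s Hs).
    pose proof (is_derive_seir_phi (U s) (U_gt_a s ltac:(lra))).
    auto_derive_from_context.
    unfold psi. rewrite tau_U by lra.
    pose proof (I_pos s ltac:(lra)).
    field. repeat split; apply Rgt_not_eq; try apply exp_pos; lra.
Qed.

Lemma tau_eq_seir_phi u : a < u <= u0 -> tau u = seir_phi psi u0 u.
Proof.
  intros Hu. destruct (tau_spec u ltac:(lra)) as [Ht HUt].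
  rewrite Rmin_left in HUt by lra.
  rewrite <- HUt at 2. now rewrite seir_phi_U.
Qed.

Lemma is_derive_tau u : a < u < u0 -> is_derive tau u (- / (u * psi u)).
Proof.
  intros Hu. apply (is_derive_ext_loc (seir_phi psi u0)).
  - apply (filter_imp (fun v => a < v /\ v < u0)).
    + intros v Hv. symmetry. apply tau_eq_seir_phi. lra.
    + apply filter_and; [apply open_gt|apply open_lt]; lra.
  - apply is_derive_seir_phi. lra.
Qed.

Let Dpsi (u : R) : R :=
  beta * (- / (u * psi u) * (delta * E (tau u) - gamma * I (tau u))).

Lemma is_derive_psi u : a < u < u0 -> is_derive psi u (Dpsi u).
Proof.
  intros Hu. apply is_derive_scal.
  exact (is_derive_comp I tau u _ _ (dI _ (tau_pos u Hu)) (is_derive_tau u Hu)).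
Qed.

Lemma continuity_pt_comp_tau (f : R -> R) u :
  a < u < u0 -> (forall t, 0 < t -> ex_derive f t) -> continuity_pt (fun v => f (tau v)) u.
Proof.
  intros Hu Hf. apply (continuity_pt_comp tau f); [apply continuity_pt_tau; lra|].
  destruct (Hf (tau u) (tau_pos u Hu)) as [l Hl].
  apply continuity_pt_filterlim, (ex_derive_continuous (V := R_NormedModule)).
  now exists l.
Qed.

Lemma continuity_pt_Dpsi u : a < u < u0 -> continuity_pt Dpsi u.
Proof.
  intros Hu. apply continuity_pt_scal, continuity_pt_mult.
  - apply (continuity_pt_opp (fun xi => / (xi * psi xi))), continuity_pt_phi_integrand. lra.
  - apply continuity_pt_minus; apply continuity_pt_scal, continuity_pt_comp_tau;
      trivial; intros t Ht; eexists.
    + now apply dE.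
    + now apply dI.
Qed.

Lemma continuous_Derive_psi u : a < u < u0 -> continuous (Derive psi) u.
Proof.
  intros Hu. apply (continuous_ext_loc _ Dpsi).
  - apply (filter_imp (fun v => a < v /\ v < u0)).
    + intros v Hv. symmetry. apply is_derive_unique, is_derive_psi, Hv.
    + apply filter_and; [apply open_gt|apply open_lt]; lra.
  - now apply continuity_pt_filterlim, continuity_pt_Dpsi.
Qed.

Lemma psi_Abel u : a < u < u0 ->
  Derive psi u * psi u - (gamma + delta) / u * psi u
  = - delta * ((beta * N - beta * K * u + gamma * ln u) / u).
Proof.
  intros Hu. rewrite (is_derive_unique _ _ _ (is_derive_psi u Hu)).
  destruct (tau_spec u ltac:(lra)) as [Ht HUt]. rewrite Rmin_left in HUt by lra.
  pose proof (SEIR_conservation (tau u) Ht) as Hcons.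
  rewrite (S_eq_K_U _ Ht), (Rc_eq_ln_U (tau u)), HUt in Hcons.
  pose proof (I_pos (tau u) Ht). pose proof a_pos.
  unfold Dpsi, psi.
  replace (E (tau u)) with (N - K * u + gamma / beta * ln u - I (tau u)) by lra.
  field. repeat split; lra.
Qed.

Let Jtau (u : R) : R := RInt (fun v => exp (delta * tau v)) u u0.

Lemma is_derive_Jtau u : a < u -> is_derive Jtau u (- exp (delta * tau u)).
Proof.
  intros Hu.
  apply (is_derive_RInt_lower (fun v => exp (delta * tau v)) a); [|exact Hu|exact a_lt_u0].
  intros z Hz. apply (continuity_pt_comp tau (fun s => exp (delta * s))).
  - now apply continuity_pt_tau.
  - apply derivable_continuous_pt. reg.
Qed.

Lemma E_representation t : 0 <= t -> E t * exp (delta * t) - K * Jtau (U t) = E0.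
Proof.
  intros Ht.
  rewrite (is_derive_0_const (fun t => E t * exp (delta * t) - K * Jtau (U t))); trivial.
  - unfold Jtau. rewrite U_0, RInt_point, E_0, Rmult_0_r, exp_0. unfold zero; simpl. ring.
  - unfold extend0. apply continuity_pt_minus.
    + apply continuity_pt_mult; [now apply continuity_pt_extend0_0|].
      apply (continuity_pt_comp (fun x => delta * Rmax 0 x) exp).
      * apply continuity_pt_scal, (continuity_pt_extend0_of_continuity (fun x => x)).
        apply continuity_pt_id.
      * apply derivable_continuous_pt, derivable_pt_exp.
    + apply continuity_pt_scal, (continuity_pt_extend0_comp_U Jtau).
      eexists. exact (is_derive_Jtau u0 a_lt_u0).
  - intros s Hs.
    pose proof (dE s Hs). pose proof (is_derive_U s Hs).
    pose proof (is_derive_Jtau (U s) (U_gt_a s ltac:(lra))).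
    auto_derive_from_context.
    rewrite tau_U, (S_eq_K_U s) by lra. ring.
Qed.

Lemma SEIR_at_tau u : a < u <= u0 ->
  let t := tau u in
  S t = K * u /\
  E t = E0 * exp (- delta * t) + K * exp (- delta * t) * Jtau u /\
  I t = N - K * u + (gamma / beta) * ln u
        - E0 * exp (- delta * t) - K * exp (- delta * t) * Jtau u /\
  Rc t = - (gamma / beta) * ln u.
Proof.
  intros Hu t. destruct (tau_spec u ltac:(lra)) as [Ht HUt].
  rewrite Rmin_left in HUt by lra. fold t in Ht, HUt.
  assert (HS : S t = K * u) by (rewrite S_eq_K_U, HUt by exact Ht; reflexivity).
  assert (HRc : Rc t = - (gamma / beta) * ln u) by (rewrite Rc_eq_ln_U, HUt; reflexivity).
  assert (HE : E t = E0 * exp (- delta * t) + K * exp (- delta * t) * Jtau u).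
  { pose proof (E_representation t Ht) as HE. rewrite HUt in HE.
    assert (Hexp : exp (delta * t) * exp (- delta * t) = 1).
    { rewrite <- exp_plus, <- exp_0. f_equal. ring. }
    transitivity (E t * exp (delta * t) * exp (- delta * t)); [rewrite Rmult_assoc, Hexp; ring|].
    replace (E t * exp (delta * t)) with (E0 + K * Jtau u) by lra. ring. }
  pose proof (SEIR_conservation t Ht). repeat split; trivial; lra.
Qed.

Lemma SEIR_parametrization :
  exists psi : R -> R,
    (forall u, a < u <= u0 -> 0 < psi u) /\
    (forall u, a < u < u0 -> continuous psi u) /\
    filterlim psi (at_left u0) (locally (psi u0)) /\
    (forall u, a < u < u0 -> ex_derive psi u /\ continuous (Derive psi) u) /\
    (forall u, a < u < u0 ->
       Derive psi u * psi u - (gamma + delta) / u * psi u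
       = - delta * ((beta * N - beta * K * u + gamma * ln u) / u)) /\
    psi u0 = beta * I0 /\
    filterlim psi (at_right a) (locally 0) /\
    (forall u, a < u <= u0 ->
       let t := seir_phi psi u0 u in
       let J := RInt (fun v => exp (delta * seir_phi psi u0 v)) u u0 in
       S t = K * u /\
       E t = E0 * exp (- delta * t) + K * exp (- delta * t) * J /\
       I t = N - K * u + (gamma / beta) * ln u
             - E0 * exp (- delta * t) - K * exp (- delta * t) * J /\
       Rc t = - (gamma / beta) * ln u).
Proof.
  exists psi. split; [|split; [|split; [|split; [|split; [|split; [|split]]]]]].
  - intros u Hu. apply psi_pos. lra.
  - intros u Hu. apply continuity_pt_filterlim, continuity_pt_psi. lra.
  - apply (filterlim_filter_le_1 (F := locally u0)); [apply filter_le_within|].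
    apply continuity_pt_filterlim, continuity_pt_psi, a_lt_u0.
  - intros u Hu. split; [eexists; now apply is_derive_psi|now apply continuous_Derive_psi].
  - exact psi_Abel.
  - exact psi_u0.
  - exact psi_lim_a.
  - intros u Hu t J.
    replace t with (tau u) by (apply tau_eq_seir_phi, Hu).
    replace J with (Jtau u).
    + exact (SEIR_at_tau u Hu).
    + apply RInt_ext. intros v Hv. rewrite Rmin_left, Rmax_right in Hv by lra.
      rewrite tau_eq_seir_phi by lra. reflexivity.
Qed.

End SEIR.

Theorem theorem1
  (beta gamma delta S0 E0 I0 R0 : R)
  (S E I Rc : R -> R)
  (Hbeta : 0 < beta) (Hgamma : 0 < gamma) (Hdelta : 0 < delta)
  (HN : 0 < S0 + E0 + I0 + R0)
  (A1 : 0 < I0)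
  (A2 : E0 > (gamma / delta) * I0)
  (A3 : S0 > delta * E0 / (beta * I0))
  (A4 : 0 <= R0 /\ S0 + E0 + I0 + R0 > S0 * exp ((beta / gamma) * R0) + R0)
  (Hsol : SEIR_solution beta gamma delta S0 E0 I0 R0 S E I Rc)
  (Hpos : forall t, 0 < t -> 0 < S t /\ 0 < E t /\ 0 < I t) :
  exists Rinf : R,
    is_lim Rc p_infty Rinf /\
    let N := S0 + E0 + I0 + R0 in
    let a := exp (- (beta / gamma) * Rinf) in
    let u0 := exp (- (beta / gamma) * R0) in
    let K := S0 * exp ((beta / gamma) * R0) in
    exists psi : R -> R,
      (* psi continuous and positive on (a, u0] *)
      (forall u, a < u <= u0 -> 0 < psi u) /\
      (forall u, a < u < u0 -> continuous psi u) /\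
      filterlim psi (at_left u0) (locally (psi u0)) /\
      (* psi is C^1 on (a, u0) *)
      (forall u, a < u < u0 -> ex_derive psi u /\ continuous (Derive psi) u) /\
      (* Abel differential equation of the second kind *)
      (forall u, a < u < u0 ->
         Derive psi u * psi u - (gamma + delta) / u * psi u
         = - delta * ((beta * N - beta * K * u + gamma * ln u) / u)) /\
      psi u0 = beta * I0 /\
      filterlim psi (at_right a) (locally 0) /\
      (* parametric representation *)
      (forall u, a < u <= u0 ->
         let t := seir_phi psi u0 u in
         let J := RInt (fun v => exp (delta * seir_phi psi u0 v)) u u0 in
         S t = K * u /\
         E t = E0 * exp (- delta * t) + K * exp (- delta * t) * J /\
         I t = N - K * u + (gamma / beta) * ln u
               - E0 * exp (- delta * t) - K * exp (- delta * t) * J /\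
         Rc t = - (gamma / beta) * ln u).
Proof.
  destruct Hsol as (S_0 & E_0 & I_0 & Rc_0 & S_right & E_right & I_right & Rc_right
                    & dS & dE & dI & dRc & _).
  assert (HRc : exists Rinf : R, is_lim Rc p_infty Rinf) 
    by (apply (Rc_ex_lim beta gamma delta S0 E0 I0 R0 S E I Rc); assumption).
  destruct HRc as [Rinf HRinf].
  exists Rinf. split; [exact HRinf|].
  apply (SEIR_parametrization beta gamma delta S0 E0 I0 R0 S E I Rc); assumption.
Qed.
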